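(* Every stick graph is a grounded L-graph. Moreover, if $G$ is a stick graph with a stick representation in which the vertices of $A$ are vertical segments and the vertices of $B$ are horizontal segments, then $G$ has a grounded L-representation that is nice with respect to the bipartition $(A,B)$.
   Context: An L-shape is the union of a vertical segment and a horizontal segment such that the bottom end-point of the vertical segment coincides with the left end-point of the horizontal segment; the top end-point of the vertical segment is its anchor. A grounded L-representation of a graph assigns an L-shape to each vertex, all anchors lying on a common horizontal line, so that two vertices are adjacent iff their L-shapes intersect; a graph having one is a grounded L-graph. A stick graph is a bipartite graph $G=(A\cup B,E)$ that is the intersection graph of a set of vertical segments (representing $A$) and a set of horizontal segments (representing $B$) such that the bottom end-points of the vertical segments and the left end-points of the horizontal segments all lie on a common straight line of slope $-1$; this is a stick representation. For a bipartite graph $G=(A\cup B,E)$, a grounded L-representation is nice (with respect to $(A,B)$) if every L-shape representing a vertex of $A$ meets other L-shapes only on its horizontal segment, and every L-shape representing a vertex of $B$ meets other L-shapes only on its vertical segment. *)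

From HB Require Import structures.
From mathcomp Require Import all_boot all_order all_algebra.
From mathcomp Require Import reals.
Set Implicit Arguments. Unset Strict Implicit. Unset Printing Implicit Defensive.
Import Order.TTheory GRing.Theory Num.Theory.
Local Open Scope ring_scope.

Section Geometry.
Variable R : realType.
Definition point := (R * R)%type.

Definition vseg (p : point) (h : R) (q : point) : Prop :=
  q.1 = p.1 /\ p.2 <= q.2 <= p.2 + h.
Definition hseg (p : point) (w : R) (q : point) : Prop :=
  q.2 = p.2 /\ p.1 <= q.1 <= p.1 + w.

Definition meets (S1 S2 : point -> Prop) : Prop := exists q, S1 q /\ S2 q.

(* L-shape with anchor (top end-point of the vertical part) a, vertical
   length h and horizontal length w: corner = (a.1, a.2 - h). *)
Definition corner (a : point) (h : R) : point := (a.1, a.2 - h).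
Definition Lvert (a : point) (h : R) := vseg (corner a h) h.
Definition Lhor (a : point) (h w : R) := hseg (corner a h) w.
Definition Lshape (a : point) (h w : R) (q : point) : Prop :=
  Lvert a h q \/ Lhor a h w q.
End Geometry.

Section Graphs.
Variables (R : realType) (T : finType).

Definition simple_graph (adj : rel T) : Prop :=
  symmetric adj /\ irreflexive adj.

Definition bipartite_wrt (adj : rel T) (A : {set T}) : Prop :=
  forall u v, adj u v -> (u \in A) != (v \in A).

(* A stick representation of adj where the vertices of A are vertical
   segments and the vertices of B = ~: A are horizontal segments:
   p v is the bottom (resp. left) end-point, l v > 0 the length. *)
Definition stick_shape (A : {set T}) (p : T -> point R) (l : T -> R) (v : T) :=
  if v \in A then vseg (p v) (l v) else hseg (p v) (l v).

Definition stick_rep (adj : rel T) (A : {set T})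
    (p : T -> point R) (l : T -> R) : Prop :=
  [/\ forall v, 0 < l v,
      exists c : R, forall v, (p v).1 + (p v).2 = c &
      forall u v, u != v ->
        (adj u v <-> meets (stick_shape A p l u) (stick_shape A p l v))].

Definition stick_graph (adj : rel T) : Prop :=
  exists A : {set T}, bipartite_wrt adj A /\
    exists p l, stick_rep adj A p l.

Definition grounded_L_rep (adj : rel T)
    (a : T -> point R) (h w : T -> R) : Prop :=
  [/\ forall v, 0 < h v /\ 0 < w v,
      exists y0 : R, forall v, (a v).2 = y0 &
      forall u v, u != v ->
        (adj u v <-> meets (Lshape (a u) (h u) (w u)) (Lshape (a v) (h v) (w v)))].

Definition grounded_L_graph (adj : rel T) : Prop :=
  exists a h w, grounded_L_rep adj a h w.

Definition nice_wrt (A : {set T}) (a : T -> point R) (h w : T -> R) : Prop :=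
  forall u v, u != v -> forall q,
    Lshape (a u) (h u) (w u) q -> Lshape (a v) (h v) (w v) q ->
    if u \in A then Lhor (a u) (h u) (w u) q else Lvert (a u) (h u) q.
End Graphs.

From HB Require Import structures.
From mathcomp Require Import all_boot all_order all_algebra.
From mathcomp Require Import reals.
From mathcomp Require Import lra.
Set Implicit Arguments. Unset Strict Implicit. Unset Printing Implicit Defensive.
Import Order.TTheory GRing.Theory Num.Theory.
Local Open Scope ring_scope.

(* Reflect the stick picture and drop all anchors onto the line y = 0: the
   stick of v, with ground point (t_v, c - t_v), becomes an L-shape anchored
   at abscissa -t_v.  A vertical stick u gets height t_u and an arm of length
   l_u; a horizontal stick v gets height t_v + l_v and a tiny arm (all heights
   are raised by a common K to make them positive).  A vertical stick u and a
   horizontal stick v meet iff t_v <= t_u <= t_v + l_v and t_u - t_v <= l_u,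
   i.e. iff the L-shape of u lies to the left of that of v, its arm is not
   below the corner of v, and its arm reaches v.  Shifting by an e below every
   gap between the finitely many values t_v and t_v + l_v breaks all ties:
   distinct vertices get distinct anchors, and meeting L-shapes have distinct
   heights, so they cross transversally, which is niceness. *)

Lemma meetsC (R : realType) (S1 S2 : point R -> Prop) :
  meets S1 S2 <-> meets S2 S1.
Proof. by split=> -[q [? ?]]; exists q. Qed.

Lemma meets_vseg_hseg (R : realType) (p1 p2 : point R) (l1 l2 : R) :
  meets (vseg p1 l1) (hseg p2 l2) <->
  p2.1 <= p1.1 <= p2.1 + l2 /\ p1.2 <= p2.2 <= p1.2 + l1.
Proof.
split.
- by move=> [q [[? /andP[? ?]] [? /andP[? ?]]]]; split; apply/andP; split; lra.
- move=> [/andP[? ?] /andP[? ?]]; exists (p1.1, p2.2).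
  by split; split=> //=; apply/andP; split.
Qed.

Lemma meets_Lshape_grounded (R : realType) (x1 x2 y0 h1 h2 w1 w2 : R) :
  x1 < x2 -> 0 <= h1 ->
  meets (Lshape (x1, y0) h1 w1) (Lshape (x2, y0) h2 w2) <->
  h1 <= h2 /\ x2 <= x1 + w1.
Proof.
move=> lt_x12 h1_ge0; split.
- by move=> [[qx qy]] [[[/= ? /andP[? ?]]|[/= ? /andP[? ?]]]
                      [[/= ? /andP[? ?]]|[/= ? /andP[? ?]]]]; split; lra.
- move=> [? ?]; exists (x2, y0 - h1); split.
  + by right; split=> //=; apply/andP; split; lra.
  + by left; split=> //=; apply/andP; split; lra.
Qed.

Lemma Lshape_grounded_common_point (R : realType) (x1 x2 y0 h1 h2 w1 w2 : R) q :
  x1 < x2 -> h1 < h2 -> Lshape (x1, y0) h1 w1 q -> Lshape (x2, y0) h2 w2 q ->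
  Lhor (x1, y0) h1 w1 q /\ Lvert (x2, y0) h2 q.
Proof.
move=> lt_x12 lt_h12 [[/= ? /andP[? ?]]|[/= ? /andP[? ?]]]
                     [[/= ? /andP[? ?]]|[/= ? /andP[? ?]]]; try lra.
by split; split=> //=; apply/andP; split; lra.
Qed.

Lemma exists_pos_lb (R : realFieldType) (s : seq R) :
  exists2 e : R, 0 < e & {in s, forall x, 0 < x -> e < x}.
Proof.
elim: s => [|x s [e e_gt0 lt_e]]; first by exists 1.
have [x_gt0|x_le0] := ltP 0 x; last first.
  by exists e => // y; rewrite inE => /predU1P[->|/lt_e//]; rewrite ltNge x_le0.
exists (Num.min e (x / 2)) => [|y]; first by rewrite lt_min e_gt0 /=; lra.
rewrite inE gt_min => /predU1P[-> _|/lt_e lt_ey /lt_ey -> //].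
by apply/orP; right; lra.
Qed.

Lemma exists_gap (R : realFieldType) (s : seq R) :
  exists2 e : R, 0 < e & {in s &, forall x y, x < y -> x + e < y}.
Proof.
have [e e_gt0 lt_e] := exists_pos_lb [seq y - x | x <- s, y <- s].
exists e => // x y xs ys lt_xy.
have := lt_e (y - x) (allpairs_f (fun x y => y - x) xs ys); lra.
Qed.

Lemma exists_ub (R : realDomainType) (s : seq R) :
  exists K : R, {in s, forall x, x < K}.
Proof.
elim: s => [|x s [K lt_K]]; first by exists 0.
exists (Num.max K (x + 1)) => y; rewrite inE lt_max.
by case/predU1P=> [->|/lt_K ->]; rewrite ?orbT // ltrDl ltr01 orbT.
Qed.

Section StickToGroundedL.
Variables (R : realType) (T : finType) (adj : rel T) (A : {set T}).
Variables (p : T -> point R) (l : T -> R) (c e K : R).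
Hypotheses (adj_sym : symmetric adj) (adj_bip : bipartite_wrt adj A).
Hypotheses (l_gt0 : forall v, 0 < l v) (p_diag : forall v, (p v).1 + (p v).2 = c).
Hypothesis adj_sticks : forall u v, u != v ->
  adj u v <-> meets (stick_shape A p l u) (stick_shape A p l v).

Local Notation t v := (p v).1.

(* [lra] ignores section hypotheses: they are pushed into the goal first. *)
Hypothesis e_gt0 : 0 < e.
Hypothesis gap_t : forall u v, t u < t v -> t u + e < t v.
Hypothesis gap_tl : forall u v, t v + l v < t u -> t v + l v + e < t u.
Hypothesis K_large : forall v, 0 < t v + K.

Definition Lx v := if v \in A then - t v - e else - t v.
Definition Lh v := if v \in A then t v + K else t v + l v + K + e.
Definition Lw v := if v \in A then l v + e else e.
Definition Lanchor v : point R := (Lx v, 0).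

Local Notation L v := (Lshape (Lanchor v) (Lh v) (Lw v)).

Lemma Lh_gt0 v : 0 < Lh v.
Proof.
by rewrite /Lh; have := e_gt0; have := K_large v; have := l_gt0 v; case: ifP; lra.
Qed.

Lemma Lw_gt0 v : 0 < Lw v.
Proof. by rewrite /Lw; have := e_gt0; have := l_gt0 v; case: ifP; lra. Qed.

Lemma nadj_same_side u v : (u \in A) = (v \in A) -> ~ adj u v.
Proof. by move=> uAvA /adj_bip; rewrite uAvA eqxx. Qed.

Lemma adj_vert_hor u v : u \in A -> v \notin A ->
  adj u v <-> [/\ t v <= t u, t u <= t v + l v & t u <= t v + l u].
Proof.
move=> uA vA; have neq_uv : u != v by apply: contraNneq vA => <-.
rewrite adj_sticks // /stick_shape uA (negbTE vA) meets_vseg_hseg.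
have := p_diag u; have := p_diag v.
by split=> [[/andP[? ?] /andP[? ?]]|[? ? ?]]; [split|split; apply/andP; split]; lra.
Qed.

Lemma adj_same_ground u v : u != v -> t u = t v -> adj u v.
Proof.
move=> neq_uv eq_t; have eq_p : p u = p v.
  move: (p_diag u) (p_diag v) eq_t.
  by case: (p u) (p v) => [xu yu] [xv yv] /= ? ? ?; congr pair; lra.
apply/adj_sticks => //; exists (p u); rewrite {2}eq_p /stick_shape.
have := l_gt0 u; have := l_gt0 v.
by split; case: ifP => _; split=> //; apply/andP; split; lra.
Qed.

Lemma Lx_inj u v : u != v -> Lx u != Lx v.
Proof.
move=> neq_uv; have := e_gt0; rewrite /Lx.
case uA: (u \in A); case vA: (v \in A) => ?; apply/eqP => eq_x.
- by apply: (nadj_same_side (etrans uA (esym vA))); apply: adj_same_ground => //; lra.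
- have /gap_t : t u < t v by lra.
  lra.
- have /gap_t : t v < t u by lra.
  lra.
- by apply: (nadj_same_side (etrans uA (esym vA))); apply: adj_same_ground => //; lra.
Qed.

Section Ordered.
Variables u v : T.
Hypothesis lt_x : Lx u < Lx v.

Lemma meets_L_ordered : meets (L u) (L v) <-> Lh u <= Lh v /\ Lx v <= Lx u + Lw u.
Proof. exact/meets_Lshape_grounded/ltW/Lh_gt0. Qed.

Lemma meets_L_ordered_sides : meets (L u) (L v) ->
  [/\ u \in A, v \notin A & Lh u < Lh v].
Proof.
move/meets_L_ordered => -[]; move: lt_x; rewrite /Lx /Lh /Lw.
have := l_gt0 u; have := e_gt0.
case: (u \in A); case: (v \in A) => /= ? ? ? ? ?.
- by exfalso; lra.
- split=> //; case: (lerP (t u) (t v + l v)) => [?|/gap_tl ?]; lra.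
- by exfalso; lra.
- exfalso; have /gap_t : t v < t u by lra.
  lra.
Qed.

Lemma adj_L_ordered_sides : adj u v -> u \in A /\ v \notin A.
Proof.
move=> adj_uv; move: lt_x (adj_bip adj_uv); rewrite /Lx.
case uA: (u \in A); case vA: (v \in A) => //= ? _.
move: adj_uv; rewrite adj_sym => /adj_vert_hor-/(_ vA (negbT uA)) [? ? ?].
by have := e_gt0; lra.
Qed.

Lemma adj_L_ordered : u \in A -> v \notin A -> adj u v <-> meets (L u) (L v).
Proof.
move=> uA vA; rewrite adj_vert_hor // meets_L_ordered; move: lt_x.
rewrite /Lx /Lh /Lw uA (negbTE vA) => ?; have := e_gt0.
split=> [[? ? ?]|[? ?]]; first by split; lra.
case: (lerP (t v) (t u)) => [?|/gap_t ?]; last lra.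
by case: (lerP (t u) (t v + l v)) => [?|/gap_tl ?]; [split|]; lra.
Qed.

Lemma adj_meets_L_ordered : adj u v <-> meets (L u) (L v).
Proof.
split=> [adj_uv|meet_uv].
- by have [uA vA] := adj_L_ordered_sides adj_uv; apply/adj_L_ordered.
- by have [uA vA _] := meets_L_ordered_sides meet_uv; apply/adj_L_ordered.
Qed.

Lemma L_ordered_common_point q : L u q -> L v q ->
  [/\ u \in A, v \notin A, Lhor (Lanchor u) (Lh u) (Lw u) q
    & Lvert (Lanchor v) (Lh v) q].
Proof.
move=> Luq Lvq; have [uA vA lt_h] : [/\ u \in A, v \notin A & Lh u < Lh v].
  by apply: meets_L_ordered_sides; exists q.
by have [] := Lshape_grounded_common_point lt_x lt_h Luq Lvq.
Qed.

End Ordered.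

Lemma adj_meets_L u v : u != v -> adj u v <-> meets (L u) (L v).
Proof.
move=> /Lx_inj; case: ltgtP => // lt_x _; first exact: adj_meets_L_ordered.
by rewrite adj_sym meetsC; apply: adj_meets_L_ordered.
Qed.

Lemma grounded_L_rep_nice :
  grounded_L_rep adj Lanchor Lh Lw /\ nice_wrt A Lanchor Lh Lw.
Proof.
split; first split.
- by move=> v; split; [apply: Lh_gt0|apply: Lw_gt0].
- by exists 0.
- exact: adj_meets_L.
- move=> u v /Lx_inj; case: ltgtP => // lt_x _ q Luq Lvq.
    by have [-> _ ? _] := L_ordered_common_point lt_x Luq Lvq.
  by have [_ /negbTE -> _ ?] := L_ordered_common_point lt_x Lvq Luq.
Qed.

End StickToGroundedL.

Lemma stick_rep_nice_grounded_L (R : realType) (T : finType) (adj : rel T)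
    (A : {set T}) (p : T -> point R) (l : T -> R) :
  symmetric adj -> bipartite_wrt adj A -> stick_rep adj A p l ->
  exists (a : T -> point R) (h w : T -> R),
    grounded_L_rep adj a h w /\ nice_wrt A a h w.
Proof.
move=> adj_sym adj_bip [l_gt0 [c p_diag] adj_sticks].
pose vals := [seq (p v).1 | v <- enum T] ++ [seq (p v).1 + l v | v <- enum T].
have [e e_gt0 gap] := exists_gap vals.
have in_vals_t v : (p v).1 \in vals.
  by rewrite mem_cat (map_f (fun v => (p v).1)) ?mem_enum.
have in_vals_tl v : (p v).1 + l v \in vals.
  by rewrite mem_cat (map_f (fun v => (p v).1 + l v)) ?mem_enum ?orbT.
have [K lt_K] := exists_ub [seq - (p v).1 | v <- enum T].
have K_large v : 0 < (p v).1 + K.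
  by have := lt_K _ (map_f (fun v => - (p v).1) (mem_enum T v)); lra.
exists (Lanchor A p e), (Lh A p l e K), (Lw A l e).
by apply: grounded_L_rep_nice => // u v; apply: gap; rewrite ?in_vals_t ?in_vals_tl.
Qed.

Theorem proposition1 (R : realType) (T : finType) (adj : rel T) :
  simple_graph adj ->
  (stick_graph R adj -> grounded_L_graph R adj) /\
  (forall (A : {set T}) (p : T -> point R) (l : T -> R),
      bipartite_wrt adj A -> stick_rep adj A p l ->
      exists (a : T -> point R) (h w : T -> R),
        grounded_L_rep adj a h w /\ nice_wrt A a h w).
Proof.
move=> [adj_sym _]; split=> [|A p l]; last exact: stick_rep_nice_grounded_L.
move=> [A [adj_bip [p [l rep]]]].
have [a [h [w [rep_L _]]]] := stick_rep_nice_grounded_L adj_sym adj_bip rep.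
by exists a, h, w.
Qed.
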